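(* There is $N$ such that for every $n\ge N$ the following holds. Let $R(x)=(2n-1)T_{2n+1}(x)+(2n+1)T_{2n-1}(x)$. For every positive root $\zeta$ of $U'_{2n-1}$ other than the smallest positive root, $R$ has a root in the interval $\left[\zeta-\frac{2}{5n^2\zeta},\ \zeta\right)$.
   Context: $T_m,U_m$ are Chebyshev polynomials of the first and second kind: $T_m(\cos\theta)=\cos m\theta$, $U_m(\cos\theta)=\sin((m+1)\theta)/\sin\theta$. *)

From Stdlib Require Import Reals Lra Lia.
Open Scope R_scope.

(* Chebyshev polynomials (as real functions), via the standard recurrence;
   they satisfy T_m(cos t) = cos(m t), U_m(cos t) = sin((m+1)t)/sin t. *)
Fixpoint cheb_pair (m : nat) (x : R) : R * R :=
  match m with
  | O => (1, x)                       (* (T_0, T_1) *)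
  | S k => let (a, b) := cheb_pair k x in (b, 2 * x * b - a)
  end.
Definition chebT (m : nat) (x : R) : R := fst (cheb_pair m x).

Fixpoint chebU_pair (m : nat) (x : R) : R * R :=
  match m with
  | O => (1, 2 * x)                   (* (U_0, U_1) *)
  | S k => let (a, b) := chebU_pair k x in (b, 2 * x * b - a)
  end.
Definition chebU (m : nat) (x : R) : R := fst (chebU_pair m x).

Definition is_root_dU (m : nat) (z : R) : Prop :=
  derivable_pt_lim (chebU m) z 0.

Definition Rpoly (n : nat) (x : R) : R :=
  (2 * INR n - 1) * chebT (2 * n + 1) x + (2 * INR n + 1) * chebT (2 * n - 1) x.

From Stdlib Require Import Reals Lra Lia Psatz FunctionalExtensionality.
Open Scope R_scope.

(* Write zeta = cos t0 with 0 < t0 < PI/2 and K = 2n.  For such angles U'_{2n-1}(cos t) = 0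
   means tan (K t) = K tan t, and R(cos t) = 2 (K cos (K t) cos t + sin (K t) sin t).  The
   phase K t - atan (K tan t) increases and is a multiple of PI exactly at these critical
   angles; since a larger critical angle exists, K t0 >= PI and K (PI/2 - t0) >= 3 PI/2,
   so K sin t0 and K cos t0 are bounded below.  At t0, R(cos t) has the sign of cos (K t0);
   after the step D = 29 / (20 K^2 sin t0 cos t0) it has the opposite sign, and a Taylor
   bound gives cos (t0 + D) >= zeta - 2 / (5 n^2 zeta). *)

Lemma nat_ind2 (P : nat -> Prop) :
  P 0%nat -> P 1%nat -> (forall m, P m -> P (S m) -> P (S (S m))) -> forall m, P m.
Proof.
  intros H0 H1 HS m.
  enough (H : P m /\ P (S m)) by apply H.
  induction m as [|m [IHm IHSm]]; split; auto.
Qed.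

Lemma chebT_S m x : chebT (S m) x = snd (cheb_pair m x).
Proof. unfold chebT; simpl; now destruct (cheb_pair m x). Qed.

Lemma chebU_S m x : chebU (S m) x = snd (chebU_pair m x).
Proof. unfold chebU; simpl; now destruct (chebU_pair m x). Qed.

Lemma chebT_SS m x : chebT (S (S m)) x = 2 * x * chebT (S m) x - chebT m x.
Proof. rewrite !chebT_S; unfold chebT; simpl; now destruct (cheb_pair m x). Qed.

Lemma chebU_SS m x : chebU (S (S m)) x = 2 * x * chebU (S m) x - chebU m x.
Proof. rewrite !chebU_S; unfold chebU; simpl; now destruct (chebU_pair m x). Qed.

Lemma chebT_cos m t : chebT m (cos t) = cos (INR m * t).
Proof.
  induction m as [| |m IHm IHSm] using nat_ind2.
  - simpl; now rewrite Rmult_0_l, cos_0.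
  - simpl; now rewrite Rmult_1_l.
  - rewrite chebT_SS, IHm, IHSm, !S_INR.
    replace ((INR m + 1 + 1) * t) with ((INR m + 1) * t + t) by ring.
    replace (INR m * t) with ((INR m + 1) * t - t) by ring.
    rewrite cos_plus, cos_minus; ring.
Qed.

Lemma chebU_cos m t : chebU m (cos t) * sin t = sin ((INR m + 1) * t).
Proof.
  induction m as [| |m IHm IHSm] using nat_ind2.
  - simpl; rewrite Rplus_0_l, !Rmult_1_l; reflexivity.
  - unfold chebU; simpl. replace ((1 + 1) * t) with (t + t) by ring. rewrite sin_plus; ring.
  - rewrite chebU_SS, !S_INR in *.
    replace ((2 * cos t * chebU (S m) (cos t) - chebU m (cos t)) * sin t)
      with (2 * cos t * (chebU (S m) (cos t) * sin t) - chebU m (cos t) * sin t) by ring.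
    rewrite IHm, IHSm.
    replace ((INR m + 1 + 1 + 1) * t) with ((INR m + 1 + 1) * t + t) by ring.
    replace ((INR m + 1) * t) with ((INR m + 1 + 1) * t - t) by ring.
    rewrite sin_plus, sin_minus; ring.
Qed.

Fixpoint dchebU (m : nat) (x : R) : R :=
  match m with
  | O => 0
  | S O => 2
  | S ((S k) as k') => 2 * chebU k' x + 2 * x * dchebU k' x - dchebU k x
  end.

Lemma chebU_derivative m x : derivable_pt_lim (chebU m) x (dchebU m x).
Proof.
  induction m as [| |m IHm IHSm] using nat_ind2.
  - apply derivable_pt_lim_const.
  - replace (chebU 1) with (fun y => 2 * id y) by reflexivity.
    replace (dchebU 1 x) with (2 * 1) by (simpl; ring).
    apply derivable_pt_lim_scal, derivable_pt_lim_id.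
  - replace (chebU (S (S m))) with (fun y => 2 * id y * chebU (S m) y - chebU m y)
      by (apply functional_extensionality; intro; now rewrite chebU_SS).
    replace (dchebU (S (S m)) x)
      with ((2 * 1 * chebU (S m) x + 2 * id x * dchebU (S m) x) - dchebU m x) by (unfold id; simpl; ring).
    apply derivable_pt_lim_minus, IHm.
    apply derivable_pt_lim_mult, IHSm.
    apply derivable_pt_lim_scal, derivable_pt_lim_id.
Qed.

Lemma dchebU_identity j x :
  (1 - x ^ 2) * dchebU (S j) x = (INR j + 2) * chebU j x - (INR j + 1) * x * chebU (S j) x.
Proof.
  induction j as [| |j IHj IHSj] using nat_ind2.
  - simpl; unfold chebU; simpl; ring.
  - simpl; unfold chebU; simpl; ring.
  - replace ((1 - x ^ 2) * dchebU (S (S (S j))) x)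
      with (2 * (1 - x ^ 2) * chebU (S (S j)) x + 2 * x * ((1 - x ^ 2) * dchebU (S (S j)) x)
            - (1 - x ^ 2) * dchebU (S j) x) by (simpl; ring).
    rewrite IHSj, IHj, !chebU_SS, !S_INR; ring.
Qed.

Lemma dchebU_pos m x : 1 <= x -> 0 < dchebU (S m) x.
Proof.
  intros Hx.
  enough (H : 1 <= chebU m x <= chebU (S m) x /\ 0 <= dchebU m x /\ 2 <= dchebU (S m) x
              /\ dchebU m x <= dchebU (S m) x) by lra.
  induction m as [|m IH].
  - simpl; unfold chebU; simpl; lra.
  - change (dchebU (S (S m)) x) with (2 * chebU (S m) x + 2 * x * dchebU (S m) x - dchebU m x).
    rewrite chebU_SS; nra.
Qed.

Lemma PI_gt_3 : 3 < PI.
Proof. pose proof PI2_3_2; lra. Qed.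

Lemma sin_cos_sq t : sin t ^ 2 + cos t ^ 2 = 1.
Proof. rewrite <- (sin2_cos2 t); unfold Rsqr; ring. Qed.

Lemma sin_cos_pos t : 0 < t < PI / 2 -> 0 < sin t /\ 0 < cos t.
Proof. intros Ht; split; [apply sin_gt_0 | apply cos_gt_0]; pose proof PI_RGT_0; lra. Qed.

Lemma atan_scaled_tan_pos K t : 0 < K -> 0 < t < PI / 2 -> 0 < atan (K * tan t).
Proof.
  intros HK Ht; rewrite <- atan_0; apply atan_increasing.
  assert (0 < tan t) by (apply tan_gt_0; lra); nra.
Qed.

Definition crit_angle (K t : R) : Prop := sin (K * t) * cos t = K * cos (K * t) * sin t.

Definition Rtrig (K t : R) : R := K * cos (K * t) * cos t + sin (K * t) * sin t.

Lemma is_root_dU_eq0 m z : is_root_dU m z -> dchebU m z = 0.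
Proof. intros H; exact (uniqueness_limite _ _ _ _ (chebU_derivative m z) H). Qed.

Lemma is_root_dU_lt1 j z : is_root_dU (S j) z -> z < 1.
Proof.
  intros H; apply is_root_dU_eq0 in H.
  destruct (Rlt_le_dec z 1) as [Hz|Hz]; [exact Hz|].
  pose proof (dchebU_pos j z Hz); lra.
Qed.

Lemma is_root_dU_crit_angle j t :
  0 < t < PI -> is_root_dU (S j) (cos t) -> crit_angle (INR j + 2) t.
Proof.
  intros Ht Hroot; unfold crit_angle.
  assert (Hid := dchebU_identity j (cos t)).
  rewrite (is_root_dU_eq0 _ _ Hroot), Rmult_0_r in Hid.
  assert (Hs : 0 < sin t) by (apply sin_gt_0; lra).
  assert (H0 : (INR j + 2) * (chebU j (cos t) * sin t)
               = (INR j + 1) * cos t * (chebU (S j) (cos t) * sin t)) by nra.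
  rewrite !chebU_cos, S_INR in H0.
  replace (INR j + 1 + 1) with (INR j + 2) in H0 by ring.
  replace ((INR j + 1) * t) with ((INR j + 2) * t - t) in H0 by ring.
  rewrite sin_minus in H0; lra.
Qed.

Lemma Rpoly_cos n t : (1 <= n)%nat -> Rpoly n (cos t) = 2 * Rtrig (2 * INR n) t.
Proof.
  intros Hn; unfold Rpoly, Rtrig; rewrite !chebT_cos.
  rewrite plus_INR, minus_INR, mult_INR by lia; simpl (INR 1); simpl (INR 2).
  replace ((1 + 1) * INR n + 1) with (2 * INR n + 1) by ring.
  replace ((1 + 1) * INR n - 1) with (2 * INR n - 1) by ring.
  replace ((2 * INR n + 1) * t) with (2 * INR n * t + t) by ring.
  replace ((2 * INR n - 1) * t) with (2 * INR n * t - t) by ring.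
  rewrite cos_plus, cos_minus; ring.
Qed.

Definition phase (K t : R) : R := K * t - atan (K * tan t).

Lemma phase_0 K : phase K 0 = 0.
Proof. unfold phase; rewrite tan_0, Rmult_0_r, atan_0; ring. Qed.

Lemma phase_derivative K t : - PI / 2 < t < PI / 2 ->
  derivable_pt_lim (phase K) t (K - K * (1 + tan t ^ 2) / (1 + (K * tan t) ^ 2)).
Proof.
  intros Ht.
  assert (Htan : derivable_pt_lim tan t (1 + tan t ^ 2)).
  { apply derive_pt_eq_1 with (derivable_pt_tan t Ht); apply derive_pt_tan. }
  replace (K - K * (1 + tan t ^ 2) / (1 + (K * tan t) ^ 2))
    with (K * 1 - / (1 + (K * tan t) ^ 2) * (K * (1 + tan t ^ 2))) by (unfold Rdiv; ring).
  apply (derivable_pt_lim_minus (fun y => K * id y) (fun y => atan (K * tan y))).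
  - apply derivable_pt_lim_scal, derivable_pt_lim_id.
  - apply (derivable_pt_lim_comp (fun y => K * tan y) atan).
    + now apply derivable_pt_lim_scal.
    + apply derivable_pt_lim_atan.
Qed.

(* The derivative is [K (K^2 - 1) tan^2 t / (1 + K^2 tan^2 t)]. *)
Lemma phase_increasing K a b : 1 < K -> 0 <= a -> a < b -> b < PI / 2 -> phase K a < phase K b.
Proof.
  intros HK Ha Hab Hb.
  destruct (MVT_cor2 (phase K) (fun t => K - K * (1 + tan t ^ 2) / (1 + (K * tan t) ^ 2)) a b Hab)
    as [c [Hc Hcab]].
  { intros c Hc; apply phase_derivative; pose proof PI_RGT_0; lra. }
  assert (Htan : 0 < tan c) by (apply tan_gt_0; lra).
  assert (Hden : 0 < 1 + (K * tan c) ^ 2) by nra.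
  assert (0 < K - K * (1 + tan c ^ 2) / (1 + (K * tan c) ^ 2)).
  { replace (K - K * (1 + tan c ^ 2) / (1 + (K * tan c) ^ 2))
      with (K * (K ^ 2 - 1) * tan c ^ 2 / (1 + (K * tan c) ^ 2)) by (field; lra).
    apply Rdiv_lt_0_compat; [|exact Hden].
    apply Rmult_lt_0_compat; [|nra]. apply Rmult_lt_0_compat; nra. }
  nra.
Qed.

(* On (0, PI/2), [crit_angle K t] says [tan (K t) = K tan t]. *)
Lemma crit_angle_phase K t :
  0 < t < PI / 2 -> crit_angle K t -> exists k : Z, phase K t = IZR k * PI.
Proof.
  intros Ht Hcrit; apply sin_eq_0_0; unfold phase.
  set (a := atan (K * tan t)).
  assert (Ha := atan_bound (K * tan t)); fold a in Ha.
  assert (Hca : 0 < cos a) by (apply cos_gt_0; lra).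
  assert (Hct : 0 < cos t) by (apply cos_gt_0; lra).
  assert (Hsa : sin a = K * (sin t / cos t) * cos a).
  { assert (Htan := tan_atan (K * tan t)); fold a in Htan; unfold tan in Htan.
    rewrite <- Htan; field; lra. }
  rewrite sin_minus, Hsa.
  replace (sin (K * t) * cos a - cos (K * t) * (K * (sin t / cos t) * cos a))
    with (cos a / cos t * (sin (K * t) * cos t - K * cos (K * t) * sin t)) by (field; lra).
  rewrite Hcrit; ring.
Qed.

Lemma PI_multiple_gap (a b : Z) : IZR a * PI < IZR b * PI -> IZR a * PI + PI <= IZR b * PI.
Proof.
  intros H; pose proof PI_RGT_0.
  assert (Hab : (a + 1 <= b)%Z).
  { enough (a < b)%Z by lia. apply lt_IZR, (Rmult_lt_reg_r PI); lra. }
  apply IZR_le in Hab; rewrite plus_IZR in Hab; nra.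
Qed.

(* The phase at consecutive critical angles grows by at least PI, starts at 0 and stays
   below [K PI / 2 = n PI]. *)
Lemma crit_angle_margins n t0 tz : (1 <= n)%nat ->
  0 < t0 -> t0 < tz -> tz < PI / 2 ->
  crit_angle (2 * INR n) t0 -> crit_angle (2 * INR n) tz ->
  PI < 2 * INR n * t0 /\ 3 * PI / 2 < 2 * INR n * (PI / 2 - t0).
Proof.
  intros Hn H0 H0z Hz C0 Cz; pose proof PI_RGT_0.
  set (K := 2 * INR n) in *.
  assert (HK : 1 < K) by (apply le_INR in Hn; unfold K; simpl in Hn; lra).
  destruct (crit_angle_phase K t0 ltac:(lra) C0) as [k0 Hk0].
  destruct (crit_angle_phase K tz ltac:(lra) Cz) as [kz Hkz].
  assert (Gap0 : IZR 0 * PI + PI <= IZR k0 * PI).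
  { apply PI_multiple_gap; rewrite <- Hk0, Rmult_0_l, <- (phase_0 K).
    apply phase_increasing; lra. }
  assert (Gap1 : IZR k0 * PI + PI <= IZR kz * PI).
  { apply PI_multiple_gap; rewrite <- Hk0, <- Hkz; apply phase_increasing; lra. }
  assert (Gap2 : IZR kz * PI + PI <= IZR (Z.of_nat n) * PI).
  { apply PI_multiple_gap; rewrite <- Hkz, <- INR_IZR_INZ; unfold phase.
    assert (0 < atan (K * tan tz)) by (apply atan_scaled_tan_pos; lra).
    assert (K * tz < K * (PI / 2)) by (apply Rmult_lt_compat_l; lra).
    unfold K in *; lra. }
  rewrite <- INR_IZR_INZ in Gap2.
  assert (Hatan := atan_bound (K * tan t0)).
  assert (0 < atan (K * tan t0)) by (apply atan_scaled_tan_pos; lra).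
  unfold phase in Hk0; unfold K in *; split; lra.
Qed.

Lemma sin_cubic_lower a : 0 <= a <= PI -> a - a ^ 3 / 6 <= sin a.
Proof.
  intros Ha; destruct (sin_bound a 0 (proj1 Ha) (proj2 Ha)) as [H _].
  unfold sin_approx, sin_term in H; simpl in H; lra.
Qed.

Lemma cos_quadratic_lower a : - PI / 2 <= a <= PI / 2 -> 1 - a ^ 2 / 2 <= cos a.
Proof.
  intros Ha; destruct (cos_bound a 0 (proj1 Ha) (proj2 Ha)) as [H _].
  unfold cos_approx, cos_term in H; simpl in H; lra.
Qed.

(* For small [phi] use [sin phi >= phi - phi^3/6]; otherwise [K sin phi >= 32 sin (1/5) > 6]. *)
Lemma scaled_sin_lower K phi A : 32 <= K -> 0 < phi <= PI / 2 -> A <= K * phi -> A <= 6 ->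
  99 / 100 * A <= K * sin phi.
Proof.
  intros HK Hphi HA HA6; pose proof PI_gt_3; pose proof PI_4.
  assert (Hs := sin_cubic_lower phi ltac:(lra)).
  destruct (Rle_lt_dec phi (1 / 5)) as [Hsmall|Hlarge].
  - assert (99 / 100 * phi <= sin phi) by nra.
    assert (0 <= K * (sin phi - 99 / 100 * phi)) by (apply Rmult_le_pos; lra).
    lra.
  - assert (Hcubic : 0 <= (phi - 1 / 5) * (2 - phi) * (phi + 11 / 5))
      by (apply Rmult_le_pos; [apply Rmult_le_pos|]; lra).
    replace ((phi - 1 / 5) * (2 - phi) * (phi + 11 / 5))
      with (- phi ^ 3 + 111 / 25 * phi - 22 / 25) in Hcubic by field.
    assert (0 <= K * (sin phi - 19 / 100)) by (apply Rmult_le_pos; lra).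
    lra.
Qed.

Lemma cos_add_lower t D : 0 <= sin t -> 0 <= cos t -> 0 < D <= PI / 2 ->
  cos t - cos t * D ^ 2 / 2 - sin t * D <= cos (t + D).
Proof.
  intros Hs Hc HD; rewrite cos_plus.
  assert (1 - D ^ 2 / 2 <= cos D) by (apply cos_quadratic_lower; lra).
  assert (sin D < D) by (apply sin_lt_x; lra).
  nra.
Qed.

Lemma crit_angle_Rtrig K t : 0 < cos t -> crit_angle K t -> cos t * Rtrig K t = K * cos (K * t).
Proof.
  intros Hc Hcrit; unfold Rtrig.
  replace (cos t * (K * cos (K * t) * cos t + sin (K * t) * sin t))
    with (K * cos (K * t) * cos t ^ 2 + (sin (K * t) * cos t) * sin t) by ring.
  rewrite Hcrit.
  replace (K * cos (K * t) * cos t ^ 2 + K * cos (K * t) * sin t * sin t)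
    with (K * cos (K * t) * (sin t ^ 2 + cos t ^ 2)) by ring.
  rewrite sin_cos_sq; ring.
Qed.

Lemma crit_angle_Rtrig_shift K t D : crit_angle K t ->
  cos t * Rtrig K (t + D) = cos (K * t) *
    (K * cos (K * D) * cos D - K ^ 2 * sin t * cos (t + D) * sin (K * D)
     + cos t * sin (t + D) * sin (K * D)).
Proof.
  intros Hcrit; unfold Rtrig.
  replace (K * (t + D)) with (K * t + K * D) by ring.
  replace (cos D) with (cos ((t + D) - t)) by (f_equal; ring).
  set (t1 := t + D); rewrite cos_minus, cos_plus, sin_plus.
  transitivity (cos (K * t) * (K * cos (K * D) * (cos t1 * cos t + sin t1 * sin t)
                 - K ^ 2 * sin t * cos t1 * sin (K * D) + cos t * sin t1 * sin (K * D))
                + (sin (K * t) * cos t - K * cos (K * t) * sin t)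
                  * (- K * sin (K * D) * cos t1 + cos (K * D) * sin t1));
    [ring|].
  rewrite Hcrit; ring.
Qed.

Lemma crit_angle_cos_neq0 K t : 0 < cos t -> crit_angle K t -> cos (K * t) <> 0.
Proof.
  intros Hc Hcrit HC; unfold crit_angle in Hcrit.
  rewrite HC, Rmult_0_r, Rmult_0_l in Hcrit.
  assert (sin (K * t) = 0) by nra.
  pose proof (sin_cos_sq (K * t)); nra.
Qed.

(* Chosen so that [K D * (K sin t cos t) = 29/20]. *)
Definition crit_step (K t : R) : R := 29 / (20 * K ^ 2 * sin t * cos t).

Section CritStep.

Variables K t : R.
Hypothesis HK : 32 <= K.
Hypothesis Ht : 0 < t < PI / 2.
Hypothesis HKs : 297 / 100 <= K * sin t.
Hypothesis HKc : 4455 / 1000 <= K * cos t.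

Lemma scaled_sin_cos_ge2 : 2 <= K * sin t * cos t.
Proof.
  destruct (sin_cos_pos t Ht) as [Hs Hc]; pose proof (sin_cos_sq t).
  destruct (Rle_lt_dec (sin t) (cos t)).
  - assert (7 / 10 <= cos t) by nra. nra.
  - assert (7 / 10 <= sin t) by nra. nra.
Qed.

Lemma crit_step_scaled : K * crit_step K t = 29 / (20 * (K * sin t * cos t)).
Proof. destruct (sin_cos_pos t Ht); unfold crit_step; field; repeat split; lra. Qed.

Lemma crit_step_bounds : 0 < crit_step K t /\ K * crit_step K t <= 73 / 100.
Proof.
  destruct (sin_cos_pos t Ht) as [Hs Hc]; pose proof scaled_sin_cos_ge2.
  split.
  - unfold crit_step; apply Rdiv_lt_0_compat; [lra|].
    repeat apply Rmult_lt_0_compat; lra.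
  - rewrite crit_step_scaled.
    apply (Rmult_le_reg_r (20 * (K * sin t * cos t))); [lra|].
    unfold Rdiv; rewrite Rmult_assoc, Rinv_l; lra.
Qed.

(* With [s = sin t], [c = cos t], [D = crit_step K t]:
   [8 / (5 K^2 c) - (c D^2 / 2 + s D) = (3/20 - 841 / (800 (K s)^2)) / (K^2 c)]. *)
Lemma cos_crit_step_lower : cos t - 8 / (5 * K ^ 2 * cos t) <= cos (t + crit_step K t).
Proof.
  destruct (sin_cos_pos t Ht) as [Hs Hc]; destruct crit_step_bounds as [HD HKD].
  set (D := crit_step K t) in *.
  assert (Hlow : cos t - cos t * D ^ 2 / 2 - sin t * D <= cos (t + D)).
  { apply cos_add_lower; try lra.
    assert (K * D <= K * (PI / 2)) by (pose proof PI_gt_3; nra). nra. }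
  assert (E : 8 / (5 * K ^ 2 * cos t) - (cos t * D ^ 2 / 2 + sin t * D)
              = (3 / 20 - 841 / (800 * (K * sin t) ^ 2)) / (K ^ 2 * cos t)).
  { unfold D, crit_step; field; repeat split; lra. }
  assert (0 <= (3 / 20 - 841 / (800 * (K * sin t) ^ 2)) / (K ^ 2 * cos t)).
  { apply Rmult_le_pos; [|left; apply Rinv_0_lt_compat; nra].
    enough (841 / (800 * (K * sin t) ^ 2) <= 3 / 20) by lra.
    apply (Rmult_le_reg_r (800 * (K * sin t) ^ 2)); [nra|].
    unfold Rdiv; rewrite Rmult_assoc, Rinv_l; nra. }
  lra.
Qed.

(* The bracket of [crit_angle_Rtrig_shift] at [D = crit_step K t]: its middle term
   is about [(29/20) K], which beats the other two, bounded by [K] and [1]. *)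
Lemma crit_step_bracket_neg :
  let D := crit_step K t in
  K * cos (K * D) * cos D - K ^ 2 * sin t * cos (t + D) * sin (K * D)
  + cos t * sin (t + D) * sin (K * D) < 0.
Proof.
  intros D; destruct (sin_cos_pos t Ht) as [Hs Hc]; destruct crit_step_bounds as [HD HKD].
  fold D in HD, HKD.
  assert (Hu0 : 0 < K * D) by nra.
  set (u := K * D) in *.
  assert (Hc1 : 9 / 10 * cos t <= cos (t + D)).
  { assert (8 / (5 * K ^ 2 * cos t) <= cos t / 10).
    { apply (Rmult_le_reg_r (5 * K ^ 2 * cos t)); [nra|].
      unfold Rdiv; rewrite Rmult_assoc, Rinv_l by nra. nra. }
    pose proof cos_crit_step_lower as Hlow; fold D in Hlow; lra. }
  assert (Hsu : u - u ^ 3 / 6 <= sin u) by (apply sin_cubic_lower; pose proof PI_gt_3; lra).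
  assert (Hu : K ^ 2 * sin t * cos t * u = 29 / 20 * K).
  { unfold u, D, crit_step; field; repeat split; lra. }
  assert (Hmid : 118 / 100 * K <= K ^ 2 * sin t * cos (t + D) * sin u).
  { assert (HK2s : 0 < K ^ 2 * sin t) by (apply Rmult_lt_0_compat; nra).
    assert (Hprod : K ^ 2 * sin t * (9 / 10 * cos t) * (u - u ^ 3 / 6)
                    <= K ^ 2 * sin t * cos (t + D) * sin u).
    { apply Rmult_le_compat; [nra | nra | | exact Hsu].
      apply Rmult_le_compat_l; lra. }
    replace (K ^ 2 * sin t * (9 / 10 * cos t) * (u - u ^ 3 / 6))
      with (9 / 10 * (K ^ 2 * sin t * cos t * u) * (1 - u ^ 2 / 6)) in Hprod by field.
    rewrite Hu in Hprod.
    assert (0 <= K * (54 / 100 - u ^ 2)) by (apply Rmult_le_pos; nra).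
    lra. }
  assert (Hcos : cos u * cos D <= 1).
  { pose proof (COS_bound u); pose proof (COS_bound D). nra. }
  assert (Hsin : cos t * sin (t + D) * sin u <= 1).
  { pose proof (COS_bound t); pose proof (SIN_bound (t + D)); pose proof (SIN_bound u).
    assert (cos t * sin (t + D) <= 1) by nra.
    assert (0 <= sin u) by nra.
    nra. }
  nra.
Qed.

End CritStep.

Lemma Rtrig_continuous K : continuity (Rtrig K).
Proof. unfold Rtrig; apply derivable_continuous; reg. Qed.

Lemma crit_angle_next_root K t0 : 32 <= K -> 0 < t0 < PI / 2 ->
  PI <= K * t0 -> 3 * PI / 2 <= K * (PI / 2 - t0) -> crit_angle K t0 ->
  exists t, t0 < t /\ cos t0 - 8 / (5 * K ^ 2 * cos t0) <= cos t < cos t0 /\ Rtrig K t = 0.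
Proof.
  intros HK Ht0 Hleft Hright Hcrit; pose proof PI_gt_3.
  assert (HKs : 99 / 100 * 3 <= K * sin t0) by (apply scaled_sin_lower; lra).
  assert (HKc : 99 / 100 * (9 / 2) <= K * cos t0).
  { rewrite <- sin_shift; apply scaled_sin_lower; lra. }
  destruct (sin_cos_pos t0 Ht0) as [_ Hc0].
  destruct (crit_step_bounds K t0 HK Ht0 ltac:(lra) ltac:(lra)) as [HD HKD].
  assert (Hlow := cos_crit_step_lower K t0 HK Ht0 ltac:(lra) ltac:(lra)).
  assert (Hneg := crit_step_bracket_neg K t0 HK Ht0 ltac:(lra) ltac:(lra)).
  set (D := crit_step K t0) in *.
  assert (HD1 : D <= 1 / 40) by nra.
  assert (HC0 := crit_angle_cos_neq0 K t0 Hc0 Hcrit).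
  assert (Hsign : Rtrig K t0 * Rtrig K (t0 + D) < 0).
  { assert (E : (cos t0 * Rtrig K t0) * (cos t0 * Rtrig K (t0 + D))
                = K * cos (K * t0) ^ 2 * (K * cos (K * D) * cos D
                  - K ^ 2 * sin t0 * cos (t0 + D) * sin (K * D)
                  + cos t0 * sin (t0 + D) * sin (K * D))).
    { rewrite crit_angle_Rtrig, crit_angle_Rtrig_shift by assumption; ring. }
    assert (0 < cos (K * t0) ^ 2) by (pose proof (Rsqr_pos_lt _ HC0); unfold Rsqr in *; nra).
    assert (0 < cos t0 ^ 2 * - (Rtrig K t0 * Rtrig K (t0 + D))); [|nra].
    replace (cos t0 ^ 2 * - (Rtrig K t0 * Rtrig K (t0 + D)))
      with (- ((cos t0 * Rtrig K t0) * (cos t0 * Rtrig K (t0 + D)))) by ring.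
    rewrite E, Ropp_mult_distr_r; apply Rmult_lt_0_compat; nra. }
  destruct (IVT_cor (Rtrig K) t0 (t0 + D) (Rtrig_continuous K) ltac:(lra) ltac:(lra))
    as [t [Ht Hroot]].
  assert (Htt0 : t0 <> t) by (intros <-; rewrite Hroot in Hsign; lra).
  exists t; split; [lra|split; [split|exact Hroot]].
  - enough (cos (t0 + D) <= cos t) by lra.
    destruct (Req_dec t (t0 + D)) as [<-|Hne]; [lra|].
    left; apply cos_decreasing_1; lra.
  - apply cos_decreasing_1; lra.
Qed.

Lemma acos_first_quadrant x : 0 < x < 1 -> 0 < acos x < PI / 2 /\ cos (acos x) = x.
Proof.
  intros Hx.
  assert (Hcos : cos (acos x) = x) by (apply cos_acos; lra).
  assert (Hb := acos_bound_lt x ltac:(lra)).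
  repeat split; try lra.
  apply cos_decreasing_0; try lra.
  rewrite cos_PI2, Hcos; lra.
Qed.

Theorem mainTheorem5 :
  exists N : nat, forall n : nat, (N <= n)%nat ->
    forall zeta : R,
      0 < zeta -> is_root_dU (2 * n - 1) zeta ->
      (exists z0 : R, 0 < z0 < zeta /\ is_root_dU (2 * n - 1) z0) ->
      exists x : R,
        zeta - 2 / (5 * INR n ^ 2 * zeta) <= x < zeta /\ Rpoly n x = 0.
Proof.
  exists 16%nat; intros n Hn zeta Hzeta Hroot [z0 [Hz0 Hroot0]].
  assert (HK : INR (2 * n - 2) + 2 = 2 * INR n).
  { rewrite minus_INR, mult_INR by lia; simpl; lra. }
  replace (2 * n - 1)%nat with (S (2 * n - 2)) in Hroot, Hroot0 by lia.
  assert (Hzeta1 := is_root_dU_lt1 _ _ Hroot).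
  destruct (acos_first_quadrant zeta ltac:(lra)) as [Ht0 Hc0].
  destruct (acos_first_quadrant z0 ltac:(lra)) as [Htz Hcz].
  assert (Hlt : acos zeta < acos z0) by (apply cos_decreasing_0; lra).
  rewrite <- Hc0 in Hroot; rewrite <- Hcz in Hroot0.
  apply is_root_dU_crit_angle in Hroot, Hroot0; try lra.
  rewrite HK in Hroot, Hroot0.
  assert (Hn16 : 16 <= INR n) by (apply le_INR in Hn; simpl in Hn; lra).
  destruct (crit_angle_margins n (acos zeta) (acos z0) ltac:(lia) ltac:(lra) Hlt ltac:(lra)
              Hroot Hroot0) as [Hleft Hright].
  destruct (crit_angle_next_root (2 * INR n) (acos zeta) ltac:(lra) ltac:(lra) ltac:(lra)
              ltac:(lra) Hroot) as [t [_ [Hbounds Hzero]]].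
  rewrite Hc0 in Hbounds.
  exists (cos t); split.
  - replace (2 / (5 * INR n ^ 2 * zeta)) with (8 / (5 * (2 * INR n) ^ 2 * zeta)) by (field; lra).
    exact Hbounds.
  - rewrite Rpoly_cos, Hzero by lia; ring.
Qed.
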